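(* For every integer $k\ge 2$: (i) $rc^*(C_{2k}(\{1,k\}))=src^*(C_{2k}(\{1,k\}))=k$; (ii) $rc^*(C_{2k}(\{1,k+1\}))=src^*(C_{2k}(\{1,k+1\}))=k$.
   Context: For $n\ge 2$ and $S\subseteq\{1,\dots,n-1\}$, the circulant digraph $C_n(S)$ has vertex set $\{v_0,\dots,v_{n-1}\}$ and arcs $v_iv_j$ for all $i,j$ with $j-i\equiv s \pmod n$ for some $s\in S$. For a strongly connected digraph $D$ and an arc-colouring $\Gamma:A(D)\to\{1,\dots,k\}$, a directed path is rainbow if its arcs have pairwise distinct colours. $\Gamma$ is rainbow connected if for every ordered pair of distinct vertices $x,y$ there is a rainbow directed $xy$-path; $rc^*(D)$ is the minimum number of colours of such a colouring. $\Gamma$ is strongly rainbow connected if for every ordered pair of distinct vertices $x,y$ there is a rainbow directed $xy$-path of length $d_D(x,y)$; $src^*(D)$ is the minimum such number. *)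

From mathcomp Require Import all_boot.
Set Implicit Arguments. Unset Strict Implicit. Unset Printing Implicit Defensive.

Definition circ_arc (n : nat) (S : seq nat) : rel 'I_n :=
  fun i j => ((j + n - i) %% n) \in S.

(* A directed x-y path in C_n(S): vertex sequence x :: p, consecutive
   vertices joined by arcs, ending at y, all vertices distinct.
   Its length is size p. *)
Definition dpath (n : nat) (S : seq nat) (x y : 'I_n) (p : seq 'I_n) : bool :=
  [&& path (circ_arc S) x p, last x p == y & uniq (x :: p)].

(* Arc colourings with colour set 'I_k (i.e. k colours); only values on
   arcs matter. *)
Definition arc_colours (n k : nat) (c : 'I_n -> 'I_n -> 'I_k)
  (x : 'I_n) (p : seq 'I_n) : seq 'I_k :=
  [seq c a.1 a.2 | a <- zip (x :: p) p].

Definition rainbow (n k : nat) (c : 'I_n -> 'I_n -> 'I_k) x p : bool :=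
  uniq (arc_colours c x p).

Definition rainbow_connected (n : nat) (S : seq nat) (k : nat)
  (c : 'I_n -> 'I_n -> 'I_k) : Prop :=
  forall x y : 'I_n, x != y -> exists p, dpath S x y p && rainbow c x p.

Definition strongly_rainbow_connected (n : nat) (S : seq nat) (k : nat)
  (c : 'I_n -> 'I_n -> 'I_k) : Prop :=
  forall x y : 'I_n, x != y -> exists p,
    [/\ dpath S x y p, rainbow c x p &
        forall q, dpath S x y q -> size p <= size q].

Definition rc_eq (n : nat) (S : seq nat) (k : nat) : Prop :=
  (exists c : 'I_n -> 'I_n -> 'I_k, rainbow_connected S c) /\
  (forall k' (c : 'I_n -> 'I_n -> 'I_k'), rainbow_connected S c -> k <= k').

Definition src_eq (n : nat) (S : seq nat) (k : nat) : Prop :=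
  (exists c : 'I_n -> 'I_n -> 'I_k, strongly_rainbow_connected S c) /\
  (forall k' (c : 'I_n -> 'I_n -> 'I_k'), strongly_rainbow_connected S c -> k <= k').

From mathcomp Require Import all_boot zify.
Set Implicit Arguments. Unset Strict Implicit. Unset Printing Implicit Defensive.

(* Let n = 2k and s be k or k+1. Colour the arc v_i v_{i+1} with i mod k and the
   arc v_i v_{i+s} with i+s-1 mod k, the colour of the unit arc entering v_{i+s}.
   If the offset d of y from x is less than s, the geodesic from x to y is a run
   of d unit arcs; otherwise it is one s-arc followed by d-s unit arcs. Either
   way its colours are at most k consecutive residues mod k, so the colouring
   is strongly rainbow connected. Conversely, a walk with a unit arcs and b
   s-arcs ends at offset a + bs, which modulo 2k depends on b only through
   (s-k)b and the parity of b; this bounds its length below by the geodesic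
   length. The offset 2k-1 (s = k) or k (s = k+1) is at distance k, so every
   rainbow connected colouring needs k colours. *)

Lemma size_arc_colours n k' (c : 'I_n -> 'I_n -> 'I_k') x p :
  size (arc_colours c x p) = size p.
Proof. by rewrite size_map size_zip /= (minn_idPr (leqnSn _)). Qed.

Lemma arc_colours_cons n k' (c : 'I_n -> 'I_n -> 'I_k') x y p :
  arc_colours c x (y :: p) = c x y :: arc_colours c y p.
Proof. by []. Qed.

Lemma rainbow_size_le n k' (c : 'I_n -> 'I_n -> 'I_k') x p :
  rainbow c x p -> size p <= k'.
Proof.
move/card_uniqP; rewrite size_arc_colours => <-.
by apply: leq_trans (max_card _) _; rewrite card_ord.
Qed.

Lemma strongly_rainbow_connectedW n S k' (c : 'I_n -> 'I_n -> 'I_k') :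
  strongly_rainbow_connected S c -> rainbow_connected S c.
Proof. by move=> h x y /h [p [hp hr _]]; exists p; rewrite hp hr. Qed.

Lemma rainbow_connected_colours_ge n S k' (c : 'I_n -> 'I_n -> 'I_k')
    (x y : 'I_n) L :
  x != y -> (forall q, dpath S x y q -> L <= size q) ->
  rainbow_connected S c -> L <= k'.
Proof.
move=> xy long /(_ x y xy) [p /andP[hp hr]].
exact: leq_trans (long p hp) (rainbow_size_le hr).
Qed.

Lemma eqn_mod_window d i j j' : i <= j < i + d -> i <= j' < i + d ->
  (j == j' %[mod d]) = (j == j').
Proof.
move=> /andP[ij jd] /andP[ij' jd']; apply/idP/eqP => [|-> //].
rewrite -(subnKC ij) -(subnKC ij') eqn_modDl !modn_small.
- by move/eqP->.
- by rewrite ltn_subLR.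
- by rewrite ltn_subLR.
Qed.

Lemma uniq_mod_iota d i m : m <= d -> uniq [seq j %% d | j <- iota i m].
Proof.
move=> md; rewrite map_inj_in_uniq ?iota_uniq // => j j'.
rewrite !mem_iota => hj hj' /eqP; rewrite (@eqn_mod_window d i) => [/eqP //||]; lia.
Qed.

Lemma modn_double_mul k t b : (t + b * k) %% (2 * k) = (t + odd b * k) %% (2 * k).
Proof.
rewrite -{1}(odd_double_half b) mulnDl addnA -muln2 -mulnA.
by rewrite addnC modnMDl.
Qed.

Lemma modn_cases u d : 0 < d ->
  [\/ u < d /\ u %% d = u, d <= u < d + d /\ u %% d = u - d
    | d + d <= u /\ u %% d < d].
Proof.
move=> d_gt0; case: (ltnP u d) => [ud | du]; first by constructor 1; rewrite modn_small.
case: (ltnP u (d + d)) => [udd | ddu]; last by constructor 3; rewrite ltn_pmod.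
constructor 2; split => //.
by rewrite -{1}(subnK du) modnDr modn_small // ltn_subLR.
Qed.

Section Circulant.
Variables (n : nat) (n_gt1 : 1 < n).

Definition vtx t : 'I_n := Ordinal (ltn_pmod t (ltnW n_gt1)).

Lemma vtxK (x : 'I_n) : vtx x = x.
Proof. by apply: val_inj; rewrite /= modn_small. Qed.

Lemma modn_sub_diff x y t : x < n -> y < n ->
  (x + t) %% n = y -> t %% n = (y + n - x) %% n.
Proof.
move=> hx hy h; have e : t + n = x + t + (n - x) by lia.
by rewrite -(modnDr t n) e -modnDml h addnBA // ltnW.
Qed.

Lemma modn_add_diff x y : x < n -> y < n -> (x + (y + n - x) %% n) %% n = y.
Proof.
move=> hx hy; rewrite modnDmr addnBA; last by lia.
by rewrite addKn modnDr modn_small.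
Qed.

Lemma vtx_add_diff (x y : 'I_n) : vtx (x + (y + n - x) %% n) = y.
Proof. by apply: val_inj; rewrite /= modn_add_diff. Qed.

Lemma diff_gt0 (x y : 'I_n) : x != y -> 0 < (y + n - x) %% n.
Proof.
apply: contraNT; rewrite lt0n negbK => /eqP d0; apply/eqP.
by rewrite -(vtx_add_diff x y) d0 addn0 vtxK.
Qed.

Lemma vtx_diff v t : ((vtx (v + t) : nat) + n - vtx v) %% n = t %% n.
Proof. by rewrite -(@modn_sub_diff (vtx v) _ t) ?ltn_ord //= modnDml. Qed.

Lemma circ_arc_vtx S v t : circ_arc S (vtx v) (vtx (v + t)) = (t %% n \in S).
Proof. by rewrite /circ_arc vtx_diff. Qed.

Lemma uniq_vtx_iota i m : m <= n -> uniq [seq vtx j | j <- iota i m].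
Proof. by move=> mn; rewrite -(map_inj_uniq val_inj) -map_comp uniq_mod_iota. Qed.

Lemma vtx_notin_iota v i m : v < i -> i + m <= v + n ->
  vtx v \notin [seq vtx j | j <- iota i m].
Proof.
move=> vi im; apply/mapP => -[j]; rewrite mem_iota => /andP[ij jm].
move/(congr1 val)/eqP; rewrite (@eqn_mod_window n v); lia.
Qed.

Definition unit_walk v m := [seq vtx j | j <- iota v.+1 m].

Lemma size_unit_walk v m : size (unit_walk v m) = m.
Proof. by rewrite size_map size_iota. Qed.

Lemma unit_walkS v m : unit_walk v m.+1 = vtx v.+1 :: unit_walk v.+1 m.
Proof. by []. Qed.

Lemma path_unit_walk S v m : 1 \in S -> path (circ_arc S) (vtx v) (unit_walk v m).
Proof.
move=> S1; elim: m v => [//|m IH] v /=.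
by rewrite IH -addn1 circ_arc_vtx (modn_small n_gt1) S1.
Qed.

Lemma last_unit_walk v m : last (vtx v) (unit_walk v m) = vtx (v + m).
Proof. by elim: m v => [|m IH] v /=; rewrite ?addn0 ?IH ?addSnnS. Qed.

Lemma path_steps s (x : 'I_n) q : path (circ_arc [:: 1; s]) x q ->
  exists a b, a + b = size q /\ val (last x q) = (x + a + b * s) %% n.
Proof.
elim: q x => [|y q IH] x /=.
  by move=> _; exists 0, 0; rewrite mul0n !addn0 modn_small.
move=> /andP[xy /IH [a [b [ab ->]]]].
have hy : val y = (x + (y + n - x) %% n) %% n by rewrite modn_add_diff.
move: xy; rewrite /circ_arc !inE => /orP[] /eqP e; rewrite e in hy.
- exists a.+1, b; split; first lia.
  by rewrite hy -addnA modnDml; congr (_ %% n); lia.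
- exists a, b.+1; split; first lia.
  by rewrite hy -addnA modnDml mulSn; congr (_ %% n); lia.
Qed.

Lemma dpath_steps s (x y : 'I_n) q : dpath [:: 1; s] x y q ->
  exists a b, a + b = size q /\ (a + b * s) %% n = (y + n - x) %% n.
Proof.
case/and3P => /path_steps [a [b [ab e]]] /eqP xqy _.
exists a, b; split => //; apply: modn_sub_diff => //.
by rewrite addnA -e xqy.
Qed.

End Circulant.

Section CirculantColouring.
Variables k s : nat.
Hypotheses (k_ge2 : 2 <= k) (s_range : k <= s <= k.+1).
Local Notation n := (2 * k).

Lemma k_gt0 : 0 < k. Proof. lia. Qed.
Lemma double_gt1 : 1 < n. Proof. lia. Qed.

Local Notation vtx := (vtx double_gt1).
Local Notation unit_walk := (unit_walk double_gt1).

Definition modk t : 'I_k := Ordinal (ltn_pmod t k_gt0).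

Definition circ_colouring : 'I_n -> 'I_n -> 'I_k := fun i j =>
  if (j + n - i) %% n == 1 then modk i else modk (i + s - 1).

Lemma circ_colouring_unit v : circ_colouring (vtx v) (vtx v.+1) = modk v.
Proof.
rewrite /circ_colouring -[v.+1]addn1 vtx_diff (modn_small double_gt1) eqxx.
by apply: val_inj; rewrite /= modn_dvdm ?dvdn_mull.
Qed.

Lemma circ_colouring_jump v : circ_colouring (vtx v) (vtx (v + s)) = modk (v + s - 1).
Proof.
rewrite /circ_colouring vtx_diff modn_small; last by lia.
have -> : (s == 1) = false by apply/eqP; lia.
apply: val_inj; rewrite /= -!addnBA; try lia.
by rewrite -modnDml modn_dvdm ?dvdn_mull // modnDml.
Qed.

Lemma colours_unit_walk v m :
  arc_colours circ_colouring (vtx v) (unit_walk v m) = [seq modk j | j <- iota v m].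
Proof.
elim: m v => [//|m IH] v.
by rewrite unit_walkS arc_colours_cons circ_colouring_unit IH.
Qed.

Lemma uniq_modk_iota i m : m <= k -> uniq [seq modk j | j <- iota i m].
Proof. by move=> mk; rewrite -(map_inj_uniq val_inj) -map_comp uniq_mod_iota. Qed.

Definition geodesic x d :=
  if s <= d then vtx (x + s) :: unit_walk (x + s) (d - s) else unit_walk x d.

Definition circ_dist d := if s <= d then (d - s).+1 else d.

Lemma size_geodesic x d : size (geodesic x d) = circ_dist d.
Proof. by rewrite /geodesic /circ_dist; case: ifP; rewrite /= size_unit_walk. Qed.

Lemma dpath_geodesic x d : 0 < d -> d < n ->
  dpath [:: 1; s] (vtx x) (vtx (x + d)) (geodesic x d).
Proof.
move=> d_gt0 d_lt; rewrite /dpath /geodesic; case: ifP => sd; apply/and3P.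
- have walk : vtx (x + s) :: unit_walk (x + s) (d - s)
              = [seq vtx j | j <- iota (x + s) (d - s).+1] by [].
  split; last by rewrite walk cons_uniq vtx_notin_iota ?uniq_vtx_iota //; lia.
  + rewrite /= circ_arc_vtx path_unit_walk // modn_small ?inE ?eqxx ?orbT //; lia.
  + by rewrite /= last_unit_walk -addnA subnKC.
- split; [exact: path_unit_walk | by rewrite last_unit_walk |].
  by rewrite -[vtx x :: _]/[seq vtx j | j <- iota x d.+1] uniq_vtx_iota.
Qed.

Lemma rainbow_geodesic x d : d < n -> rainbow circ_colouring (vtx x) (geodesic x d).
Proof.
move=> d_lt; rewrite /rainbow /geodesic; case: ifP => sd.
- rewrite arc_colours_cons circ_colouring_jump colours_unit_walk.
  set t := x + s - 1; have -> : x + s = t.+1 by rewrite /t; lia.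
  by rewrite -[modk t :: _]/[seq modk j | j <- iota t (d - s).+1] uniq_modk_iota //; lia.
- by rewrite colours_unit_walk uniq_modk_iota //; lia.
Qed.

Lemma circ_dist_le_steps a b : 0 < (a + b * s) %% n ->
  circ_dist ((a + b * s) %% n) <= a + b.
Proof.
have odd_le : odd b <= b by case: (odd b) (@odd_gt0 b) => // ->.
rewrite /circ_dist; have [-> | ->] : s = k \/ s = k.+1 by lia.
- rewrite modn_double_mul; have := modn_cases (a + odd b * k) (ltnW double_gt1).
  case: (odd b) odd_le => /= b_ge; rewrite ?mul1n ?mul0n ?addn0;
    by case=> -[] hu r; rewrite ?r => r_gt0; case: ifP; lia.
- have -> : a + b * k.+1 = a + b + b * k by rewrite mulnSr; lia.
  rewrite modn_double_mul; have := modn_cases (a + b + odd b * k) (ltnW double_gt1).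
  case: (odd b) odd_le => /= b_ge; rewrite ?mul1n ?mul0n ?addn0;
    by case=> -[] hu r; rewrite ?r => r_gt0; case: ifP; lia.
Qed.

Lemma dpath_size_ge (x y : 'I_n) q : x != y -> dpath [:: 1; s] x y q ->
  circ_dist ((y + n - x) %% n) <= size q.
Proof.
move=> xy /(dpath_steps double_gt1) [a [b [<- e]]].
by rewrite -e circ_dist_le_steps // e (diff_gt0 double_gt1).
Qed.

Lemma strongly_rainbow_circ_colouring : strongly_rainbow_connected [:: 1; s] circ_colouring.
Proof.
move=> x y xy; set d := (y + n - x) %% n.
have d_lt : d < n by apply: ltn_pmod; lia.
exists (geodesic x d); split.
- by have := dpath_geodesic x (diff_gt0 double_gt1 xy) d_lt; rewrite vtxK vtx_add_diff.
- by have := rainbow_geodesic x d_lt; rewrite vtxK.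
- by move=> q /(dpath_size_ge xy); rewrite size_geodesic.
Qed.

Lemma circ_dist_eq_k : exists2 d, 0 < d < n & circ_dist d = k.
Proof.
rewrite /circ_dist; have [-> | ->] : s = k \/ s = k.+1 by lia.
- by exists n.-1; last case: ifP; lia.
- by exists k; last case: ifP; lia.
Qed.

Lemma circ_rainbow_colours_ge k' (c : 'I_n -> 'I_n -> 'I_k') :
  rainbow_connected [:: 1; s] c -> k <= k'.
Proof.
have [d /andP[d_gt0 d_lt] dk] := circ_dist_eq_k.
have xy : vtx 0 != vtx (0 + d).
  by apply/eqP => /(congr1 val); rewrite /= add0n mod0n modn_small //; lia.
apply: (rainbow_connected_colours_ge xy) => q /(dpath_size_ge xy).
by rewrite vtx_diff modn_small // dk.
Qed.

Lemma rc_src_circulant : rc_eq n [:: 1; s] k /\ src_eq n [:: 1; s] k.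
Proof.
have src := strongly_rainbow_circ_colouring.
split; split.
- by exists circ_colouring; apply: strongly_rainbow_connectedW.
- exact: circ_rainbow_colours_ge.
- by exists circ_colouring.
- by move=> k' c /strongly_rainbow_connectedW /circ_rainbow_colours_ge.
Qed.

End CirculantColouring.

Theorem theorem9 (k : nat) (hk : 2 <= k) :
  (rc_eq (2 * k) [:: 1; k] k /\ src_eq (2 * k) [:: 1; k] k) /\
  (rc_eq (2 * k) [:: 1; k.+1] k /\ src_eq (2 * k) [:: 1; k.+1] k).
Proof. by split; apply: rc_src_circulant; rewrite // leqnn leqnSn. Qed.
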